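(* Let $\mu$ be a positive Borel measure on $\mathbb{R}$ with infinitely many points in its support and all moments finite, let $(\hat p_n)_{n\ge0}$ be its monic orthogonal polynomials, and let $(\rho_n)_{n\ge0}$ be nonzero real numbers with $\rho_0=1$, $p_n=\rho_n\hat p_n$. Then $(p_n)_n$ satisfies the three term recurrence $$xp_n(x)=a_{n+1}p_{n+1}(x)+b_np_n(x)+c_np_{n-1}(x),\quad n\ge1,$$ with $a_n=\rho_{n-1}/\rho_n$, $c_n=\rho_n\hat c_n/\rho_{n-1}$ (where $x\hat p_n=\hat p_{n+1}+b_n\hat p_n+\hat c_n\hat p_{n-1}$, $\hat c_n>0$). Let $K\ge2$ be an integer and $\gamma_0,\dots,\gamma_K$ real numbers with $\gamma_0\neq0$, $\gamma_K\neq0$, and set $$q_n(x)=\sum_{j=0}^K\gamma_jp_{n-j}(x),\quad n\ge K.$$ Then there exist polynomials $A$, of degree $K-2$, and $B$, of degree $K-1$ (depending on $n$), such that $$q_n(x)=A(x)p_n(x)+B(x)p_{n-1}(x).$$ Moreover, assume that $(\tau_n)_n$ is a decreasing sequence of positive numbers such that for a certain positive integer $n_1$ $$\max\left\{\left|\frac{a_n}{c_{n-1}}\right|,\left|\frac{b_{n-1}}{c_{n-1}}\right|,\left|\frac{1}{c_{n-1}}\right|\right\}\le\tau_n\le\frac12,\quad n\ge n_1.$$ Then for $n\ge n_1$ and all real $x$, $$|A(x)|\le2^K\Gamma_0\Big(1+\sum_{j=1}^{K-2}\tau_{n-K+1}^{j+1}|x|^j\Big),\qquad |B(x)|\le2^K\Gamma_1\sum_{j=0}^{K-1}\tau_{n-K+1}^{j}|x|^j,$$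 where $\Gamma_i=\max\{|\gamma_j|:i\le j\le K\}$.
   Context: The sequence $(b_n)_n$ is the sequence of coefficients in the recurrence of the monic orthogonal polynomials $x\hat p_n(x)=\hat p_{n+1}(x)+b_n\hat p_n(x)+\hat c_n\hat p_{n-1}(x)$, $n\ge1$. *)

From HB Require Import structures.
From mathcomp Require Import all_boot all_order all_algebra.
From mathcomp Require Import all_classical all_reals all_analysis.
Set Implicit Arguments. Unset Strict Implicit. Unset Printing Implicit Defensive.
Import Order.TTheory GRing.Theory Num.Theory.
Local Open Scope classical_set_scope.
Local Open Scope ring_scope.

Definition msupport (R : realType) (mu : {measure set R -> \bar R}) : set R :=
  [set x | forall e : R, 0 < e -> (0 < mu `](x - e)%R, (x + e)%R[%classic)%E].

Definition finite_moments (R : realType) (mu : {measure set R -> \bar R}) :=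
  forall k : nat, mu.-integrable setT (fun x : R => (x ^+ k)%:E).

Definition monic_OPS (R : realType) (mu : {measure set R -> \bar R})
    (ph : nat -> {poly R}) :=
  (forall n, ph n \is monic) /\ (forall n, size (ph n) = n.+1) /\
  (forall n m, n != m ->
     (\int[mu]_x ((ph n).[x] * (ph m).[x])%:E = 0)%E).

Definition rec_a (R : realType) (rho : nat -> R) (n : nat) : R :=
  rho n.-1 / rho n.
Definition rec_c (R : realType) (rho chat : nat -> R) (n : nat) : R :=
  rho n * chat n / rho n.-1.

Definition qcomb (R : realType) (gamma : nat -> R) (p : nat -> {poly R})
    (K n : nat) : {poly R} :=
  \sum_(j < K.+1) gamma j *: p (n - j)%N.

Definition GammaMax (R : realType) (gamma : nat -> R) (K i : nat) : R :=
  \big[Num.max/0]_(i <= j < K.+1) `|gamma j|.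

From mathcomp Require Import all_boot all_order all_algebra.
From mathcomp Require Import all_classical all_reals all_analysis.
From mathcomp Require Import ring lra zify.
Set Implicit Arguments. Unset Strict Implicit. Unset Printing Implicit Defensive.
Import Order.TTheory GRing.Theory Num.Theory.
Local Open Scope ring_scope.

(* Running the recurrence backwards, p_{m-1} = ((x - b_m) p_m - a_{m+1} p_{m+1}) / c_m,
   every p_{n-j} becomes U_j p_n + V_j p_{n-1}, where U and V solve the same backward
   recurrence from the initial values (1, 0) and (0, 1); hence A = sum_j gamma_j U_j and
   B = sum_j gamma_j V_j.  V_j has degree j - 1, and U_{j+1} is the nonzero constant
   -a_n / c_{n-1} times the V of the recurrence shifted by one step, which gives the
   degrees.  The backward coefficients are bounded by tau |x| + tau and tau, and since
   tau <= 1/2 an induction gives |V_j(x)| <= 2^(j-1) sum_(i<j) (tau |x|)^i; summing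
   against the gamma_j yields the bounds. *)

Fixpoint linrec (R : pzRingType) (L M : nat -> R) (x0 x1 : R) (j : nat) : R :=
  match j with
  | 0 => x0
  | j'.+1 => if j' is k.+1 then L k * linrec L M x0 x1 j' + M k * linrec L M x0 x1 k
             else x1
  end.

Section LinearRecurrence.
Variables (R : pzRingType) (L M : nat -> R).

Lemma linrecSS x0 x1 j :
  linrec L M x0 x1 j.+2 = L j * linrec L M x0 x1 j.+1 + M j * linrec L M x0 x1 j.
Proof. by []. Qed.

Lemma linrec_fundamental (P : nat -> R) N :
  (forall j, (j.+2 <= N)%N -> P j.+2 = L j * P j.+1 + M j * P j) ->
  forall j, (j <= N)%N -> P j = linrec L M 1 0 j * P 0 + linrec L M 0 1 j * P 1.
Proof.
move=> recP; elim/ltn_ind=> -[|[|j]] IH jN.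
- by rewrite mul1r mul0r addr0.
- by rewrite mul0r mul1r add0r.
have jN1 := ltnW jN; have jN0 := ltnW jN1.
rewrite recP // (IH j.+1) // (IH j) // !linrecSS.
by rewrite !mulrDr !mulrA addrACA -!mulrDl.
Qed.

End LinearRecurrence.

Lemma linrec_shift (R : pzRingType) (L M : nat -> R) j :
  linrec L M 1 0 j.+1 = linrec (fun i => L i.+1) (fun i => M i.+1) 0 1 j * M 0.
Proof.
rewrite (@linrec_fundamental _ (fun i => L i.+1) (fun i => M i.+1)
           (fun i => linrec L M 1 0 i.+1) j) //.
by rewrite linrecSS /= !mulr0 mulr1 !add0r.
Qed.

Lemma sum_scale_linrec_fundamental (R : nzRingType) (L M P : nat -> {poly R})
    (g : nat -> R) N :
  (forall j, (j.+2 <= N)%N -> P j.+2 = L j * P j.+1 + M j * P j) ->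
  \sum_(j < N.+1) g j *: P j =
  (\sum_(j < N.+1) g j *: linrec L M 1 0 j) * P 0 +
  (\sum_(j < N.+1) g j *: linrec L M 0 1 j) * P 1.
Proof.
move=> recP; rewrite !mulr_suml -big_split; apply: eq_bigr => j _.
by rewrite (linrec_fundamental recP (ltn_ord j)) scalerDr !scalerAl.
Qed.

Definition geosum (R : pzSemiRingType) (u : R) (n : nat) : R := \sum_(i < n) u ^+ i.

Lemma geosumS (R : pzSemiRingType) (u : R) n : geosum u n.+1 = 1 + u * geosum u n.
Proof.
rewrite /geosum big_ord_recl expr0 mulr_sumr.
by congr (_ + _); apply: eq_bigr => i _; rewrite exprS.
Qed.

Lemma geosum2 (R : pzRingType) n : geosum (2 : R) n = 2 ^+ n - 1.
Proof. by rewrite subrX1 [2 - 1](addrK 1 1) mul1r. Qed.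

Lemma geosum_mulE (R : comPzRingType) (t y : R) m :
  geosum (t * y) m = \sum_(0 <= j < m) t ^+ j * y ^+ j.
Proof. by rewrite big_mkord; apply: eq_bigr => j _; rewrite exprMn. Qed.

Lemma geosum_mul_tailE (R : comPzRingType) (t y : R) m :
  (0 < m)%N -> t * (geosum (t * y) m - 1) = \sum_(1 <= j < m) t ^+ j.+1 * y ^+ j.
Proof.
case: m => // m _; rewrite geosumS [1 + _]addrC addrK geosum_mulE !mulr_sumr big_add1 /=.
by apply: eq_bigr => j _; rewrite !exprS; ring.
Qed.

Lemma geosum_ge0 (R : numDomainType) (u : R) n : 0 <= u -> 0 <= geosum u n.
Proof. by move=> u_ge0; apply: sumr_ge0 => i _; rewrite exprn_ge0. Qed.

Lemma geosum_le (R : numDomainType) (u : R) m n :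
  0 <= u -> (m <= n)%N -> geosum u m <= geosum u n.
Proof.
move=> u_ge0 mn; rewrite /geosum -!(big_mkord xpredT) (big_cat_nat (leq0n m) mn).
by rewrite lerDl sumr_ge0 // => i _; rewrite exprn_ge0.
Qed.

Lemma geosum_step_le (R : realFieldType) (u t : R) j :
  0 <= u -> 0 <= t -> t <= 1 / 2 ->
  2 * (u + t) * geosum u j.+1 + t * geosum u j <= 4 * geosum u j.+2.
Proof.
move=> u_ge0 t_ge0 t_le_half.
have s0_ge0 := geosum_ge0 j u_ge0; have s1_ge0 := geosum_ge0 j.+1 u_ge0.
have tS1 := ler_wpM2r s1_ge0 t_le_half; have tS0 := ler_wpM2r s0_ge0 t_le_half.
have s01 : geosum u j <= geosum u j.+1 by rewrite geosum_le.
have uS : u * geosum u j <= u * geosum u j.+1 by rewrite ler_wpM2l.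
have uS1 : 0 <= u * geosum u j.+1 by rewrite mulr_ge0.
have s1 := geosumS u j; have s2 := geosumS u j.+1; lra.
Qed.

Lemma size_sum_scale_le (R : nzRingType) (g : nat -> R) (Q : nat -> {poly R}) m s :
  (forall j, (j < m)%N -> (size (Q j) <= s)%N) ->
  (size (\sum_(j < m) g j *: Q j)%R <= s)%N.
Proof.
move=> Q_le; apply: leq_trans (size_sum _ _ _) _; apply/bigmax_leqP => j _.
exact: leq_trans (size_scale_leq _ _) (Q_le j (ltn_ord j)).
Qed.

Lemma size_sum_scale_lead (R : idomainType) (g : nat -> R) (Q : nat -> {poly R}) m :
  g m != 0 -> (forall j, (j < m)%N -> (size (Q j) < size (Q m))%N) ->
  size (\sum_(j < m.+1) g j *: Q j) = size (Q m).
Proof.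
move=> gm Q_lt; rewrite big_ord_recr /= addrC.
case: m gm Q_lt => [|m] gm Q_lt; first by rewrite big_ord0 addr0 size_scale.
rewrite size_polyDl size_scale //.
have Qm_gt0 : (0 < size (Q m.+1))%N by apply: leq_ltn_trans (Q_lt 0%N _).
rewrite -(prednK Qm_gt0) ltnS; apply: size_sum_scale_le => j jm.
by rewrite -ltnS prednK // Q_lt // ltnW.
Qed.

Section FundamentalSize.
Variables (R : idomainType) (L M : nat -> {poly R}) (N : nat).
Hypotheses (size_L : forall j, (j.+2 <= N)%N -> size (L j) = 2)
           (size_M : forall j, (j.+2 <= N)%N -> (size (M j) <= 1)%N).

(* The offset [s] covers the shifted recurrence of [linrec_shift]. *)
Lemma size_linrec01 s j :
  (s + j <= N)%N -> size (linrec (fun i => L (s + i)) (fun i => M (s + i)) 0 1 j) = j.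
Proof.
elim/ltn_ind: j => -[|[|j]] IH jN; [exact: size_poly0 | exact: size_poly1 |].
have sizeL : size (L (s + j)) = 2 by rewrite size_L //; lia.
have sizeM : (size (M (s + j)) <= 1)%N by rewrite size_M //; lia.
set V := linrec _ _ 0 1.
have sizeV1 : size (V j.+1) = j.+1 by apply: IH => //; lia.
have sizeV0 : size (V j) = j by apply: IH => //; lia.
have sizeLV : size (L (s + j) * V j.+1) = j.+2.
  by rewrite size_mul -?size_poly_eq0 ?sizeL ?sizeV1.
rewrite /V linrecSS -/V size_polyDl sizeLV //.
apply: leq_ltn_trans (size_mul_leq _ _) _; rewrite sizeV0 ltnS (@leq_trans j) //.
by rewrite -subn1 leq_subLR leq_add2r.
Qed.

Lemma size_linrec10 j : size (M 0) = 1 -> (j < N)%N -> size (linrec L M 1 0 j.+1) = j.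
Proof.
move=> sizeM0 jN; rewrite linrec_shift (size1_polyC (eq_leq sizeM0)) mulrC size_Cmul.
  exact: (@size_linrec01 1).
by rewrite -polyC_eq0 -(size1_polyC (eq_leq sizeM0)) -size_poly_eq0 sizeM0.
Qed.

Lemma size_sum_linrec01 (g : nat -> R) :
  g N != 0 -> size (\sum_(j < N.+1) g j *: linrec L M 0 1 j) = N.
Proof.
move=> gN; rewrite size_sum_scale_lead // (@size_linrec01 0) // => j jN.
by rewrite (@size_linrec01 0) // ltnW.
Qed.

Lemma size_sum_linrec10_le (g : nat -> R) :
  size (M 0) = 1 -> (2 <= N)%N ->
  (size (\sum_(j < N.+1) g j *: linrec L M 1 0 j)%R <= N.-1)%N.
Proof.
move=> sizeM0 N2; apply: size_sum_scale_le => -[|j] jN; first by rewrite size_poly1; lia.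
by rewrite size_linrec10 //; lia.
Qed.

Lemma size_sum_linrec10 (g : nat -> R) :
  size (M 0) = 1 -> (2 < N)%N -> g N != 0 ->
  size (\sum_(j < N.+1) g j *: linrec L M 1 0 j) = N.-1.
Proof.
move=> sizeM0 N2 gN.
have sizeUN : size (linrec L M 1 0 N) = N.-1.
  by rewrite -{1}(ltn_predK N2) size_linrec10 //; lia.
rewrite size_sum_scale_lead // sizeUN => -[|j] jN; first by rewrite size_poly1; lia.
by rewrite size_linrec10 //; lia.
Qed.

End FundamentalSize.

Section FundamentalBound.
Variables (R : realFieldType) (L M : nat -> {poly R}) (N : nat) (t x : R).
Hypotheses (t_ge0 : 0 <= t) (t_le_half : t <= 1 / 2).
Hypotheses (L_le : forall j, (j.+2 <= N)%N -> `|(L j).[x]| <= t * `|x| + t)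
           (M_le : forall j, (j.+2 <= N)%N -> `|(M j).[x]| <= t).

Let u := t * `|x|.

(* Stated for [2 * |V_j|] to avoid the exponent j - 1 at j = 0. *)
Lemma norm_linrec01_le s j :
  (s + j <= N)%N ->
  2 * `|(linrec (fun i => L (s + i)) (fun i => M (s + i)) 0 1 j).[x]| <=
  2 ^+ j * geosum u j.
Proof.
have u_ge0 : 0 <= u by rewrite mulr_ge0.
elim/ltn_ind: j => -[|[|j]] IH jN.
- by rewrite horner0 normr0 mulr0 /geosum big_ord0 mulr0.
- by rewrite hornerC normr1 expr1 geosumS /geosum big_ord0 mulr0 addr0.
set V := linrec _ _ 0 1.
have IH1 : 2 * `|(V j.+1).[x]| <= 2 * 2 ^+ j * geosum u j.+1.
  by rewrite -exprS; apply: IH => //; lia.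
have IH0 : 2 * `|(V j).[x]| <= 2 ^+ j * geosum u j by apply: IH => //; lia.
have step : `|(V j.+2).[x]| <= (u + t) * `|(V j.+1).[x]| + t * `|(V j).[x]|.
  rewrite /V linrecSS -/V hornerD !hornerM; apply: le_trans (ler_normD _ _) _.
  rewrite !normrM; apply: lerD; apply: ler_wpM2r => //.
    by apply: L_le; lia.
  by apply: M_le; lia.
apply: (@le_trans _ _ ((u + t) * (2 * `|(V j.+1).[x]|) + t * (2 * `|(V j).[x]|))).
  by rewrite mulrCA (mulrCA t) -mulrDr ler_wpM2l.
apply: le_trans (lerD (ler_wpM2l _ IH1) (ler_wpM2l t_ge0 IH0)) _; first exact: addr_ge0.
rewrite -subr_ge0 !exprS.
have -> : 2 * (2 * 2 ^+ j) * geosum u j.+2 -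
          ((u + t) * (2 * 2 ^+ j * geosum u j.+1) + t * (2 ^+ j * geosum u j)) =
          2 ^+ j * (4 * geosum u j.+2 -
                    (2 * (u + t) * geosum u j.+1 + t * geosum u j)) by ring.
by rewrite mulr_ge0 ?exprn_ge0 // subr_ge0 geosum_step_le.
Qed.

Lemma norm_linrec10_le j :
  (1 < N)%N -> (j < N)%N ->
  2 * `|(linrec L M 1 0 j.+1).[x]| <= t * (2 ^+ j * geosum u j).
Proof.
move=> N2 jN; rewrite linrec_shift hornerM normrM [_ * `|(M 0).[x]|]mulrC mulrCA.
apply: ler_pM; rewrite ?mulr_ge0 ?M_le //.
exact: (@norm_linrec01_le 1).
Qed.

End FundamentalBound.

Lemma norm_horner_sum_scale_le (R : numDomainType) (g : nat -> R) (Q : nat -> {poly R}) m x :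
  `|(\sum_(j < m) g j *: Q j).[x]| <= \sum_(j < m) `|g j| * `|(Q j).[x]|.
Proof.
rewrite horner_sum; apply: le_trans (ler_norm_sum _ _ _) _.
by apply: ler_sum => j _; rewrite hornerZ normrM.
Qed.

Lemma GammaMax_ge (R : realType) (g : nat -> R) K i j :
  (i <= j <= K)%N -> `|g j| <= GammaMax g K i.
Proof.
by move=> /andP[ij jK]; apply: (le_bigmax_seq _ j); rewrite // mem_index_iota ij ltnS.
Qed.

Lemma GammaMax_ge0 (R : realType) (g : nat -> R) K i : 0 <= GammaMax g K i.
Proof. exact: bigmax_ge_id. Qed.

Section CombinationBound.
Variables (R : realType) (gamma : nat -> R) (L M : nat -> {poly R}) (K : nat) (t x : R).
Hypotheses (t_ge0 : 0 <= t) (t_le_half : t <= 1 / 2).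
Hypotheses (L_le : forall j, (j.+2 <= K)%N -> `|(L j).[x]| <= t * `|x| + t)
           (M_le : forall j, (j.+2 <= K)%N -> `|(M j).[x]| <= t).

Let u := t * `|x|.

Lemma norm_sum_linrec01_le :
  `|(\sum_(j < K.+1) gamma j *: linrec L M 0 1 j).[x]| <=
  2 ^+ K * GammaMax gamma K 1 * geosum u K.
Proof.
have u_ge0 : 0 <= u by rewrite mulr_ge0.
set G := GammaMax gamma K 1; set g := geosum u K.
have G_ge0 : 0 <= G := GammaMax_ge0 gamma K 1.
have g_ge0 : 0 <= g := geosum_ge0 K u_ge0.
have term_le (i : 'I_K) :
    `|gamma (lift ord0 i)| * `|(linrec L M 0 1 (lift ord0 i)).[x]| <= G * (2 ^+ i * g).
  apply: ler_pM => //; first by apply: GammaMax_ge; rewrite /= ltn_ord.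
  rewrite -(ler_pM2l (_ : 0 < 2)) // mulrA -exprS.
  apply: le_trans (norm_linrec01_le t_ge0 t_le_half L_le M_le (s := 0) _) _ => /=.
    exact: ltn_ord.
  by rewrite ler_wpM2l ?exprn_ge0 // geosum_le.
apply: le_trans (norm_horner_sum_scale_le _ _ _ _) _.
rewrite big_ord_recl horner0 normr0 mulr0 add0r.
apply: le_trans (ler_sum _ (fun i _ => term_le i)) _.
rewrite -mulr_sumr -mulr_suml -/(geosum 2 K) geosum2 -subr_ge0.
have -> : 2 ^+ K * G * g - G * ((2 ^+ K - 1) * g) = G * g by ring.
exact: mulr_ge0.
Qed.

Lemma norm_sum_linrec10_le :
  (1 < K)%N ->
  `|(\sum_(j < K.+1) gamma j *: linrec L M 1 0 j).[x]| <=
  2 ^+ K * GammaMax gamma K 0 * (1 + t * (geosum u K.-1 - 1)).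
Proof.
move=> K2; have u_ge0 : 0 <= u by rewrite mulr_ge0.
set G := GammaMax gamma K 0; set g := geosum u K.-1.
have G_ge0 : 0 <= G := GammaMax_ge0 gamma K 0.
have tg_ge0 : 0 <= t * g by rewrite mulr_ge0 ?geosum_ge0.
have term_le (i : 'I_K) :
    2 * (`|gamma (lift ord0 i)| * `|(linrec L M 1 0 (lift ord0 i)).[x]|) <=
    G * (t * g * 2 ^+ i).
  rewrite mulrCA; apply: ler_pM => //; first by apply: GammaMax_ge; rewrite /= ltn_ord.
  rewrite lift0.
  apply: le_trans (norm_linrec10_le t_ge0 t_le_half L_le M_le K2 (ltn_ord i)) _.
  rewrite -mulrA [g * _]mulrC ler_wpM2l // ler_wpM2l ?exprn_ge0 // geosum_le //.
  by rewrite -ltnS (ltn_predK K2).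
have gamma0_le : `|gamma 0| <= G := @GammaMax_ge _ gamma K 0 0 isT.
rewrite -(ler_pM2l (_ : 0 < 2)) //.
apply: le_trans (ler_wpM2l _ (norm_horner_sum_scale_le _ _ _ _)) _ => //.
rewrite big_ord_recl mulrDr hornerC normr1 mulr1 mulr_sumr.
apply: le_trans (lerD (ler_wpM2l _ gamma0_le) (ler_sum _ (fun i _ => term_le i))) _ => //.
rewrite -mulr_sumr -mulr_sumr -/(geosum 2 K) geosum2 -subr_ge0.
set P := 2 ^+ K.
have -> : 2 * (P * G * (1 + t * (g - 1))) - (2 * G + G * (t * g * (P - 1))) =
          G * (2 * P * (1 - t) - 2 + t * g * (P + 1)) by ring.
have P_ge2 : 2 <= P by apply: ler_eXnr; [exact: ltnW | rewrite ler1n].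
have Pt : P * t <= P * (1 / 2) by rewrite ler_wpM2l // (le_trans _ P_ge2).
have tgP : 0 <= t * g * P by rewrite mulr_ge0 // (le_trans _ P_ge2).
rewrite mulr_ge0 //; lra.
Qed.

End CombinationBound.

Lemma scaled_three_term (R : realType) (ph : nat -> {poly R}) (b chat rho : nat -> R) m :
  rho m.+1 != 0 -> rho m.-1 != 0 ->
  'X * ph m = ph m.+1 + b m *: ph m + chat m *: ph m.-1 ->
  'X * (rho m *: ph m) = rec_a rho m.+1 *: (rho m.+1 *: ph m.+1) +
    b m *: (rho m *: ph m) + rec_c rho chat m *: (rho m.-1 *: ph m.-1).
Proof.
move=> rho1 rho0 rec; rewrite /rec_a /rec_c -scalerAr rec !scalerDr !scalerA /=.
by rewrite divfK // divfK // mulrC.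
Qed.

Definition back_L (R : fieldType) (b c : nat -> R) (m : nat) : {poly R} :=
  (c m)^-1 *: ('X - (b m)%:P).

Definition back_M (R : fieldType) (a c : nat -> R) (m : nat) : {poly R} :=
  (- (a m.+1 / c m))%:P.

Lemma three_term_backward (R : fieldType) (a b c : nat -> R) (p : nat -> {poly R}) m :
  c m != 0 -> 'X * p m = a m.+1 *: p m.+1 + b m *: p m + c m *: p m.-1 ->
  p m.-1 = back_L b c m * p m + back_M a c m * p m.+1.
Proof.
move=> cm rec.
have e : (c m)%:P * p m.-1 = ('X - (b m)%:P) * p m - (a m.+1)%:P * p m.+1.
  by rewrite mulrBl rec -!mul_polyC; ring.
rewrite -[p m.-1]mul1r -polyC1 -(mulVf cm) polyCM -mulrA e.
by rewrite /back_L /back_M -mul_polyC polyCN polyCM; ring.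
Qed.

Lemma backward_recurrence (R : fieldType) (a b c : nat -> R) (p : nat -> {poly R}) n N :
  (N <= n)%N -> (forall m, (1 <= m)%N -> c m != 0) ->
  (forall m, (1 <= m)%N -> 'X * p m = a m.+1 *: p m.+1 + b m *: p m + c m *: p m.-1) ->
  forall j, (j.+2 <= N)%N ->
  p (n - j.+2)%N =
  back_L b c (n - j.+1) * p (n - j.+1)%N + back_M a c (n - j.+1) * p (n - j)%N.
Proof.
move=> Nn c_neq0 rec j jN; have jn : (j < n)%N by lia.
by rewrite subnS -(subnSK jn) (@three_term_backward _ a b c) ?c_neq0 ?rec //; lia.
Qed.

Lemma size_back_L (R : fieldType) (b c : nat -> R) m : c m != 0 -> size (back_L b c m) = 2.
Proof. by move=> cm; rewrite size_scale ?invr_eq0 // size_XsubC. Qed.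

Lemma size_back_M (R : fieldType) (a c : nat -> R) m :
  a m.+1 != 0 -> c m != 0 -> size (back_M a c m) = 1.
Proof. by move=> am cm; rewrite size_polyC oppr_eq0 mulf_neq0 ?invr_eq0. Qed.

Lemma norm_back_L_le (R : realFieldType) (b c : nat -> R) m t x :
  `|1 / c m| <= t -> `|b m / c m| <= t -> `|(back_L b c m).[x]| <= t * `|x| + t.
Proof.
rewrite div1r => ct bt; rewrite /back_L hornerZ !hornerE mulrBr.
apply: le_trans (ler_normB _ _) _; rewrite normrM.
by apply: lerD; [rewrite ler_wpM2r | rewrite mulrC].
Qed.

Lemma norm_back_M (R : realFieldType) (a c : nat -> R) m x :
  `|(back_M a c m).[x]| = `|a m.+1 / c m|.
Proof. by rewrite hornerC normrN. Qed.

Lemma norm_back_coef_le (R : realFieldType) (a b c tau : nat -> R) n1 n N x :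
  (forall m, tau m.+1 <= tau m) ->
  (forall m, (n1 <= m)%N ->
     Num.max `|a m / c m.-1| (Num.max `|b m.-1 / c m.-1| `|1 / c m.-1|) <= tau m) ->
  (N <= n)%N -> (n1 + N - 1 <= n)%N ->
  forall j, (j.+2 <= N)%N ->
  `|(back_L b c (n - j.+1)).[x]| <= tau (n - N).+1 * `|x| + tau (n - N).+1 /\
  `|(back_M a c (n - j.+1)).[x]| <= tau (n - N).+1.
Proof.
move=> tau_noninc tau_le Nn nN j jN.
have tau_j : tau (n - j.+1).+1 <= tau (n - N).+1.
  by apply: (Order.NatMonotonyTheory.nonincnP tau_noninc); lia.
have := tau_le (n - j.+1).+1 ltac:(lia); rewrite /= !ge_max => /and3P[aj bj cj].
by rewrite norm_back_M norm_back_L_le ?(le_trans _ tau_j).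
Qed.

Theorem mainTheorem1 (R : realType) (mu : {measure set R -> \bar R})
  (ph : nat -> {poly R}) (b chat rho gamma : nat -> R) (K : nat)
  (hsupp : ~ finite_set (msupport mu))
  (hmom : finite_moments mu)
  (hOPS : monic_OPS mu ph)
  (hrec0 : 'X * ph 0%N = ph 1%N + b 0%N *: ph 0%N)
  (hrec : forall n, (1 <= n)%N ->
     'X * ph n = ph n.+1 + b n *: ph n + chat n *: ph n.-1)
  (hchat : forall n, (1 <= n)%N -> 0 < chat n)
  (hrho : forall n, rho n != 0) (hrho0 : rho 0%N = 1)
  (hK : (2 <= K)%N) (hg0 : gamma 0%N != 0) (hgK : gamma K != 0) :
  let p := fun n => rho n *: ph n in
  let a := rec_a rho in
  let c := rec_c rho chat in
  (forall n, (1 <= n)%N ->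
     'X * p n = a n.+1 *: p n.+1 + b n *: p n + c n *: p n.-1) /\
  (forall n, (K <= n)%N ->
   exists A B : {poly R},
     qcomb gamma p K n = A * p n + B * p n.-1 /\
     (size A <= K.-1)%N /\ ((2 < K)%N -> size A = K.-1) /\
     size B = K /\
     forall (tau : nat -> R) (n1 : nat),
       (1 <= n1)%N ->
       (forall m, 0 < tau m) ->
       (forall m, tau m.+1 <= tau m) ->
       (forall m, (n1 <= m)%N ->
          Num.max `|a m / c m.-1| (Num.max `|b m.-1 / c m.-1| `|1 / c m.-1|)
            <= tau m /\ tau m <= 1 / 2) ->
       (n1 + K - 1 <= n)%N ->
       forall x : R,
         `|A.[x]| <= 2 ^+ K * GammaMax gamma K 0
                      * (1 + \sum_(1 <= j < K.-1)
                               tau (n - K).+1 ^+ j.+1 * `|x| ^+ j) /\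
         `|B.[x]| <= 2 ^+ K * GammaMax gamma K 1
                      * \sum_(0 <= j < K) tau (n - K).+1 ^+ j * `|x| ^+ j).
Proof.
move=> p a c.
have c_neq0 m : (1 <= m)%N -> c m != 0.
  by move=> m1; rewrite /c /rec_c !mulf_neq0 ?invr_eq0 ?hrho // gt_eqF ?hchat.
have p_rec m : (1 <= m)%N -> 'X * p m = a m.+1 *: p m.+1 + b m *: p m + c m *: p m.-1.
  by move=> m1; apply: scaled_three_term; rewrite ?hrec.
split=> // n Kn.
pose L j := back_L b c (n - j.+1)%N; pose M j := back_M a c (n - j.+1)%N.
have size_L j : (j.+2 <= K)%N -> size (L j) = 2.
  by move=> jK; rewrite size_back_L // c_neq0 // subn_gt0; lia.
have size_M j : (size (M j) <= 1)%N by exact: size_polyC_leq1.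
have size_M0 : size (M 0) = 1.
  by rewrite size_back_M ?c_neq0 ?mulf_neq0 ?invr_eq0 ?hrho //; lia.
exists (\sum_(j < K.+1) gamma j *: linrec L M 1 0 j),
       (\sum_(j < K.+1) gamma j *: linrec L M 0 1 j).
split.
  rewrite /qcomb (sum_scale_linrec_fundamental _ (backward_recurrence Kn c_neq0 p_rec)).
  by rewrite subn0 subn1.
split; first exact: size_sum_linrec10_le.
split; first by move=> K2; apply: size_sum_linrec10.
split; first exact: size_sum_linrec01.
move=> tau n1 _ tau_gt0 tau_noninc tau_le nK x.
have coef_le := norm_back_coef_le x tau_noninc (fun m m1 => proj1 (tau_le m m1)) Kn nK.
have t_le_half : tau (n - K).+1 <= 1 / 2 by apply: (proj2 (tau_le _ _)); lia.
have t_ge0 : 0 <= tau (n - K).+1 := ltW (tau_gt0 _).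
rewrite -geosum_mul_tailE -?geosum_mulE; last lia.
split; [apply: norm_sum_linrec10_le | apply: norm_sum_linrec01_le] => //;
  by move=> j /coef_le[? ?].
Qed.
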